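(* Let $q=p^n$ be odd, let $k\neq 0$ be a positive integer, and let $f(x)=ax^{p^k+1}+dx^{p^k}+bx+c\in\mathbb{F}_q[x]$. If $f(x)=g(x)^2$ for some polynomial $g$, then either $d^{p^k}a=ba^{p^k}$ and $d^{p^k+1}a=ca^{p^k+1}$, or $a=b=d=0$. *)

From mathcomp Require Import all_boot all_algebra all_field.

From mathcomp Require Import all_boot all_algebra all_field.
From mathcomp Require Import zify ring.

(* Squares have even degree, which settles a = 0.  For a <> 0 write d = -ae.
   Since P = p^k is a power of the characteristic, (x + e)^P = x^P + e^P, so
   f(x + e) = a x^(P+1) + (a e^P + b) x + (b e + c), whose only terms are the
   leading one and two of degree < (P+1)/2.  Such a square must have no lower
   terms at all: if g = q x^m + r with deg r < m, then
   g^2 - q^2 x^(2m) = r (r + 2 q x^m) has degree m + deg r unless r = 0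
   (here 2 q <> 0 because p is odd).
   Hence b = -a e^P and c = -b e, which are the claimed identities.  Only the
   characteristic of F matters, not its cardinality. *)
Import GRing.Theory.
Local Open Scope ring_scope.

Set Implicit Arguments.
Unset Strict Implicit.
Unset Printing Implicit Defensive.

Lemma size_scaleXn_add (R : idomainType) (c : R) (m : nat) (h : {poly R}) :
  c != 0 -> (size h <= m)%N -> size (c *: 'X^m + h) = m.+1.
Proof. by move=> c0 hm; rewrite size_polyDl size_scale ?size_polyXn. Qed.

Lemma size_scaleX_addC_leq (R : nzSemiRingType) (b c : R) :
  (size (b *: 'X + c%:P)%R <= 2)%N.
Proof.
apply: leq_trans (size_polyD _ _) _; rewrite geq_max.
by rewrite (leq_trans (size_scale_leq _ _)) ?size_polyX // (leq_trans (size_polyC_leq1 _)).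
Qed.

Lemma scaleX_addC_eq0 (R : nzSemiRingType) (b c : R) :
  b *: 'X + c%:P = 0 -> b = 0 /\ c = 0.
Proof.
move=> h0; split.
  by have := congr1 (coefp 1) h0; rewrite /= coefD coefZ coefX coefC mulr1 addr0 coef0.
by have := congr1 (coefp 0) h0; rewrite /= coefD coefZ coefX coefC mulr0 add0r coef0.
Qed.

Lemma size_sqr_pred_even (R : idomainType) (g : {poly R}) : ~~ odd (size (g ^+ 2)).-1.
Proof. by rewrite size_exp muln2 odd_double. Qed.

Lemma poly_take_coef (R : nzSemiRingType) (m : nat) (g : {poly R}) :
  (size g <= m.+1)%N -> g = take_poly m g + g`_m *: 'X^m.
Proof.
move=> sg; rewrite -{1}(poly_take_drop m g) -mul_polyC; congr (_ + _ * _).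
by rewrite [LHS]size1_polyC ?coef_drop_poly // size_drop_poly leq_subLR addn1.
Qed.

Lemma sqr_scaleXn_add_eq0 (F : fieldType) (g h : {poly F}) (A : F) (m : nat) :
  2%:R != 0 :> F -> A != 0 -> (size h <= m)%N ->
  g ^+ 2 = A *: 'X^(m.*2) + h -> h = 0.
Proof.
move=> two_neq0 A_neq0 size_h E.
have size_h2 : (size h <= m.*2)%N by rewrite (leq_trans size_h) // -addnn leq_addr.
have size_g : (size g <= m.+1)%N.
  have := size_exp g 2; rewrite E size_scaleXn_add //=.
  by rewrite -muln2 => /eqP; rewrite eqn_pmul2r // => /eqP ->; exact: leqSpred.
have gE := poly_take_coef size_g; have size_r := size_take_poly m g.
move: (take_poly m g) (g`_m) gE size_r => r q gE size_r.
have sqr_diff : h + (A - q ^+ 2) *: 'X^(m.*2) = r * (r + (2%:R * q) *: 'X^m).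
  by rewrite -(addKr (A *: 'X^(m.*2)) h) -E gE -addnn exprD -!mul_polyC; ring.
have [Aq|Aq] := eqVneq A (q ^+ 2); last first.
  have size_cofactor_le : (size (r + (2%:R * q) *: 'X^m)%R <= m.+1)%N.
    rewrite (leq_trans (size_polyD _ _)) // geq_max (leq_trans size_r) //.
    by rewrite (leq_trans (size_scale_leq _ _)) ?size_polyXn.
  exfalso; have := size_polyMleq r (r + (2%:R * q) *: 'X^m).
  by rewrite -sqr_diff addrC size_scaleXn_add ?subr_eq0 //; lia.
rewrite Aq subrr scale0r addr0 in sqr_diff.
have [r0|r_neq0] := eqVneq r 0; first by rewrite sqr_diff r0 mul0r.
have q_neq0 : q != 0 by apply: contraNneq A_neq0; rewrite Aq => ->; rewrite expr0n.
have size_cofactor_eq : size (r + (2%:R * q) *: 'X^m) = m.+1.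
  by rewrite addrC size_scaleXn_add ?mulf_neq0.
have cofactor_neq0 : r + (2%:R * q) *: 'X^m != 0.
  by rewrite -size_poly_eq0 size_cofactor_eq.
exfalso; move: size_h; rewrite sqr_diff size_mul // size_cofactor_eq addnS /=.
by rewrite -[X in (_ <= X)%N]add0n leq_add2r leqNgt size_poly_gt0 r_neq0.
Qed.

Lemma XaddC_exp_pchar (R : comNzRingType) (P : nat) (e : R) :
  [pchar R].-nat P -> ('X + e%:P) ^+ P = 'X^P + (e ^+ P)%:P.
Proof.
move=> charP; rewrite exprDn_pchar ?rmorphXn //.
by apply: sub_in_pnat charP => q _; rewrite pchar_poly.
Qed.

Lemma comp_XaddC_depress (R : comNzRingType) (P : nat) (a b c e : R) :
  [pchar R].-nat P ->
  (a *: 'X^(P.+1) + - (a * e) *: 'X^P + b *: 'X + c%:P) \Po ('X + e%:P) =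
  a *: 'X^(P.+1) + (a * e ^+ P + b) *: 'X + (b * e + c)%:P.
Proof.
move=> charP; rewrite !comp_polyD !comp_polyZ !comp_Xn_poly.
rewrite comp_polyX comp_polyC !exprSr XaddC_exp_pchar //.
by rewrite -!mul_polyC; ring.
Qed.

Lemma sqr_scaleXn_scaleX_addC (R : idomainType) (g : {poly R}) (d b c : R) (P : nat) :
  odd P -> (1 < P)%N -> d *: 'X^P + b *: 'X + c%:P = g ^+ 2 -> d = 0 /\ b = 0.
Proof.
move=> oddP P_gt1; rewrite -addrA => E.
have [d0|d_neq0] := eqVneq d 0; last first.
  have size_low : (size (b *: 'X + c%:P)%R <= P)%N.
    exact: leq_trans (size_scaleX_addC_leq b c) P_gt1.
  by have := size_sqr_pred_even g; rewrite -E size_scaleXn_add /= ?oddP.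
rewrite d0 scale0r add0r in E; split=> //.
apply: contraTeq (size_sqr_pred_even g) => b_neq0.
by rewrite -E size_polyDl size_scale ?size_polyX // ltnS size_polyC_leq1.
Qed.

Lemma sqr_depress_coefE (F : fieldType) (g : {poly F}) (a b c e : F) (P : nat) :
  2%:R != 0 :> F -> [pchar F].-nat P -> odd P -> (1 < P)%N -> a != 0 ->
  a *: 'X^(P.+1) + - (a * e) *: 'X^P + b *: 'X + c%:P = g ^+ 2 ->
  b = - (a * e ^+ P) /\ c = - (b * e).
Proof.
move=> two_neq0 charP oddP P_gt1 a_neq0 /(congr1 (comp_poly ('X + e%:P))).
rewrite comp_XaddC_depress // comp_polyM -expr2 -addrA => /esym shifted.
have P1E : P.+1 = (uphalf P).*2 by lia.
have size_low : (size ((a * e ^+ P + b) *: 'X + (b * e + c)%:P)%R <= uphalf P)%N.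
  by apply: leq_trans (size_scaleX_addC_leq _ _) _; lia.
rewrite P1E in shifted.
have [] := scaleX_addC_eq0 (sqr_scaleXn_add_eq0 two_neq0 a_neq0 size_low shifted).
by move=> /eqP; rewrite addrC addr_eq0 => /eqP -> /eqP; rewrite addrC addr_eq0 => /eqP ->.
Qed.

Theorem lemma1 (F : finFieldType) (p n k : nat)
  (hp : prime p) (hodd : odd p) (hchar : p \in [pchar F])
  (hcard : #|F| = (p ^ n)%N) (hk : (0 < k)%N)
  (a b c d : F) (g : {poly F}) :
  a *: 'X^((p ^ k).+1) + d *: 'X^(p ^ k) + b *: 'X + c%:P = g ^+ 2 ->
  (d ^+ (p ^ k) * a = b * a ^+ (p ^ k) /\
   d ^+ ((p ^ k).+1) * a = c * a ^+ ((p ^ k).+1))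
  \/ (a = 0 /\ b = 0 /\ d = 0).
Proof.
move=> E; set P := (p ^ k)%N in E *.
have oddP : odd P by rewrite oddX hodd orbT.
have p_gt2 := odd_prime_gt2 hodd hp.
have P_gt1 : (1 < P)%N.
  by rewrite (leq_trans (ltnW p_gt2)) // -{1}(expn1 p) leq_exp2l ?prime_gt1.
have [a0|a_neq0] := eqVneq a 0.
  rewrite a0 scale0r add0r in E.
  by have [d0 b0] := sqr_scaleXn_scaleX_addC oddP P_gt1 E; right.
have two_neq0 : 2%:R != 0 :> F by rewrite -(dvdn_pcharf hchar) gtnNdvd.
have charP : [pchar F].-nat P by rewrite pnatX (pnatE _ hp) hchar.
have [e dE] : exists e, d = - (a * e).
  by exists (- (d / a)); rewrite mulrN opprK mulrC divfK.
rewrite dE in E *; left.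
have [-> ->] := sqr_depress_coefE two_neq0 charP oddP P_gt1 a_neq0 E.
have negP (x : F) : (- x) ^+ P = - x ^+ P by rewrite exprNn -signr_odd oddP mulN1r.
by rewrite !exprSr !negP !exprMn; split; ring.
Qed.
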